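(* Let $b>1$, $p\ge1$ and $R\subseteq\{0,\ldots,p-1\}$ be such that $(p,R)$ is proper, and let $k$ be the greatest divisor of $p$ coprime with $b$. Then the minimisation of $\mathcal{A}_{R,p}$ possesses exactly $k$ states that belong to $0$-circuits.
   Context: $A_b=\{0,\ldots,b-1\}$. $\mathcal{A}_{R,p}$ is the complete deterministic automaton over $A_b$ with states $\{0,\ldots,p-1\}$, initial state $0$, final states $R$, and transitions $n\xrightarrow{a}(nb+a)\bmod p$. $(p,R)$ is proper if $p$ is the smallest period of $R+p\mathbb{N}$, i.e. there are no $1\le p'<p$ and $R'\subseteq\{0,\ldots,p'-1\}$ with $R+p\mathbb{N}=R'+p'\mathbb{N}$. The minimisation of a complete deterministic automaton is the (unique up to isomorphism) complete deterministic automaton with the fewest states accepting the same language. A $0$-circuit is a circuit all of whose transitions are labelled by the digit $0$. *)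

From mathcomp Require Import all_boot.
Set Implicit Arguments. Unset Strict Implicit. Unset Printing Implicit Defensive.

Record DFA (b : nat) := MkDFA {
  dfa_state :> finType;
  dfa_init : dfa_state;
  dfa_final : pred dfa_state;
  dfa_delta : dfa_state -> 'I_b -> dfa_state
}.

Definition dfa_run b (M : DFA b) (w : seq 'I_b) : dfa_state M :=
  foldl (@dfa_delta b M) (@dfa_init b M) w.

Definition accepts b (M : DFA b) (w : seq 'I_b) : bool :=
  @dfa_final b M (dfa_run M w).

Definition same_language b (M N : DFA b) : Prop :=
  forall w, accepts M w = accepts N w.

Definition is_minimisation b (N M : DFA b) : Prop :=
  same_language M N /\
  forall M' : DFA b, same_language M' N -> #|dfa_state M| <= #|dfa_state M'|.

Definition on_zero_circuit b (M : DFA b) (q : dfa_state M) : Prop :=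
  exists a : 'I_b, val a = 0 /\
    exists n, 0 < n /\ iter n (fun s => @dfa_delta b M s a) q = q.

Definition ARp (b p : nat) (hp : 0 < p) (R : {set 'I_p}) : DFA b :=
  @MkDFA b 'I_p (Ordinal hp) (fun q => q \in R)
    (fun n a => Ordinal (ltn_pmod (n * b + a) hp)).

Definition arith_set (p : nat) (R : {set 'I_p}) (n : nat) : Prop :=
  exists2 r : 'I_p, r \in R & exists m, n = r + p * m.

Definition proper_pair (p : nat) (R : {set 'I_p}) : Prop :=
  ~ exists p' : nat, exists R' : {set 'I_p'},
      [/\ 1 <= p', p' < p & forall n, arith_set R n <-> arith_set R' n].

Definition gdiv_coprime (p b : nat) : nat :=
  \max_(d < p.+1 | (d %| p) && coprime d b) d.

From mathcomp Require Import all_boot.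
From mathcomp Require Import cyclic.
From mathcomp Require Import zify.

Set Implicit Arguments.
Unset Strict Implicit.
Unset Printing Implicit Defensive.

(* Write p = d * k with k = p`_(\pi(b)^'), the largest divisor of p coprime to b,
   so that every prime factor of d divides b.  A minimal automaton is accessible
   and reduced (otherwise dropping unreachable states, or merging two states with
   the same future, would give a smaller one), so its states are the Nerode
   classes of the residues x mod p, and reading a 0 sends the class of x to that
   of x * b.  As d %| b ^ n for n >= d, going around a 0-circuit often enough
   lands in the class of some d * z with z < k; conversely b ^ totient k = 1 mod k
   gives d * z * b ^ totient k = d * z mod p, so each such class lies on a
   0-circuit.  These k classes are distinct: if d * z1 and d * z2 were
   Nerode-equivalent, appending words whose length is a multiple of totient k
   would make d * (z2 - z1) < p a period of R + pN, against properness. *)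

Lemma iter_mul_fixed (T : Type) (f : T -> T) n t x :
  iter n f x = x -> iter (n * t) f x = x.
Proof. by move=> fix_x; elim: t => [|t IH]; rewrite ?muln0 // mulnS iterD IH. Qed.

Section MinimalDFA.
Variable b : nat.

Definition accepts_from {M : DFA b} (q : M) (u : seq 'I_b) : bool :=
  dfa_final (foldl (@dfa_delta b M) q u).

Lemma accepts_from_run (M : DFA b) w u :
  accepts_from (dfa_run M w) u = accepts M (w ++ u).
Proof. by rewrite /accepts /dfa_run foldl_cat. Qed.

Lemma iter_delta (M : DFA b) (a : 'I_b) n (q : M) :
  iter n (fun s => dfa_delta s a) q = foldl (@dfa_delta b M) q (nseq n a).
Proof. by elim: n q => [|n IH] q //=; rewrite -IH -iterSr. Qed.

Section Reachable.
Variable M : DFA b.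

Definition reachable : pred M :=
  connect (fun s t => [exists a, dfa_delta s a == t]) (dfa_init M).

Lemma reachable_delta {s : M} a : reachable s -> reachable (dfa_delta s a).
Proof. by move/connect_trans; apply; apply/connect1/existsP; exists a. Qed.

Lemma reachableP (q : M) : reflect (exists w, dfa_run M w = q) (reachable q).
Proof.
apply: (iffP idP) => [/connectP[ss path_ss ->] | [w <-]].
  rewrite /dfa_run; elim: ss (dfa_init M) path_ss => [|t ss IH] s /= path_s.
    by exists [::].
  case/andP: path_s => /existsP[a /eqP <-] /IH[w run_w].
  by exists (a :: w).
suff from_reachable s : reachable s -> reachable (foldl (@dfa_delta b M) s w).
  exact/from_reachable/connect0.
by elim: w s => //= a w IH s /(reachable_delta a)/IH.
Qed.

Definition reachable_dfa : DFA b :=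
  @MkDFA b {q : M | reachable q} (exist _ (dfa_init M) (connect0 _ _))
    (fun s => dfa_final (val s))
    (fun s a => exist _ (dfa_delta (val s) a) (reachable_delta a (valP s))).

Lemma reachable_dfa_language : same_language reachable_dfa M.
Proof.
suff run_val s w : val (foldl (@dfa_delta b reachable_dfa) s w)
                   = foldl (@dfa_delta b M) (val s) w.
  by move=> w; rewrite /accepts /dfa_run /= run_val.
by elim: w s => //= a w IH s; rewrite IH.
Qed.

End Reachable.

Section Merge.
Variables (M : DFA b) (q1 q2 : M).
Hypotheses (q12 : q1 != q2) (same_future : accepts_from q1 =1 accepts_from q2).

Definition redirect (q : M) : {q : M | q != q2} := insubd (exist _ q1 q12) q.

Definition merge_dfa : DFA b :=
  @MkDFA b {q : M | q != q2} (redirect (dfa_init M))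
    (fun s => dfa_final (val s)) (fun s a => redirect (dfa_delta (val s) a)).

Lemma accepts_from_redirect q : accepts_from (val (redirect q)) =1 accepts_from q.
Proof. by move=> u; rewrite val_insubd; case: eqP => [->|]. Qed.

Lemma merge_dfa_language : same_language merge_dfa M.
Proof.
suff from_val (s : merge_dfa) w : accepts_from s w = accepts_from (val s) w.
  by move=> w; rewrite /accepts /dfa_run -/(accepts_from _ w) from_val accepts_from_redirect.
elim: w s => // a w IH s.
exact: etrans (IH _) (accepts_from_redirect _ w).
Qed.

Lemma card_merge_dfa : #|merge_dfa| < #|M|.
Proof. by rewrite /= card_sig cardC1 prednK //; apply/card_gt0P; exists q1. Qed.

End Merge.

Variables N M : DFA b.
Hypothesis M_min : is_minimisation N M.

Lemma minimisation_reachable (q : M) : exists w, dfa_run M w = q.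
Proof.
case: M_min => lang minimal; apply/reachableP.
have := minimal (reachable_dfa M) (fun w => etrans (reachable_dfa_language M w) (lang w)).
rewrite card_sig; set A := [pred x | _] => card_le.
have /card0_eq/(_ q) : #|[predC A]| = 0.
  by move: card_le; rewrite -(cardC A) -{2}[#|A|]addn0 leq_add2l leqn0 => /eqP.
by rewrite !inE => /negbFE.
Qed.

Lemma minimisation_accepts_from_inj (q1 q2 : M) :
  accepts_from q1 =1 accepts_from q2 -> q1 = q2.
Proof.
move=> same; apply/eqP/negPn/negP => q12; case: M_min => lang minimal.
have := minimal _ (fun w => etrans (merge_dfa_language q12 same w) (lang w)).
by rewrite leqNgt card_merge_dfa.
Qed.

End MinimalDFA.

Section Digits.
Variable b : nat.

Definition wval (w : seq 'I_b) : nat := foldl (fun n (a : 'I_b) => n * b + a) 0 w.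

Lemma foldl_wval s w :
  foldl (fun n (a : 'I_b) => n * b + a) s w = s * b ^ size w + wval w.
Proof.
elim/last_ind: w => [|w a IH]; first by rewrite muln1 addn0.
by rewrite /wval !foldl_rcons -/(wval w) IH size_rcons expnSr; lia.
Qed.

Lemma wval_cat u v : wval (u ++ v) = wval u * b ^ size v + wval v.
Proof. by rewrite /wval foldl_cat foldl_wval. Qed.

Lemma wval_nseq0 (a : 'I_b) n : a = 0 :> nat -> wval (nseq n a) = 0.
Proof.
move=> a0; elim: n => //= n IH.
by rewrite -cat1s wval_cat IH /wval /= a0.
Qed.

Hypothesis b_gt1 : 1 < b.

Fixpoint digits (n x : nat) : seq 'I_b :=
  if n is n'.+1 then rcons (digits n' (x %/ b)) (Ordinal (ltn_pmod x (ltnW b_gt1)))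
  else [::].

Lemma size_digits n x : size (digits n x) = n.
Proof. by elim: n x => //= n IH x; rewrite size_rcons IH. Qed.

Lemma wval_digits n x : wval (digits n x) = x %% b ^ n.
Proof.
elim: n x => [|n IH] x /=; first by rewrite modn1.
rewrite /wval foldl_rcons -/(wval _) IH modn_divl expnSr /=.
by rewrite -(@modn_dvdm (b ^ n * b) x b (dvdn_mull _ (dvdnn b))) -divn_eq.
Qed.

Lemma wval_digits_id n x : x <= n -> wval (digits n x) = x.
Proof.
move=> x_le_n; rewrite wval_digits modn_small //.
exact: leq_ltn_trans x_le_n (ltn_expl n b_gt1).
Qed.

End Digits.

Lemma gdiv_coprimeE p b : 0 < p -> 0 < b -> gdiv_coprime p b = p`_(\pi(b)^').
Proof.
move=> p_gt0 b_gt0; apply/eqP; rewrite eqn_leq; apply/andP; split.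
  apply/bigmax_leqP => e /andP[e_p e_b].
  have e_gt0 : 0 < e := dvdn_gt0 p_gt0 e_p.
  rewrite coprime_sym coprime_pi' // in e_b.
  by apply: dvdn_leq; rewrite ?part_gt0 // -(part_pnat_id e_b) partn_dvd.
have part_lt : p`_(\pi(b)^') < p.+1 by rewrite ltnS dvdn_leq ?dvdn_part.
apply: (leq_bigmax_cond (Ordinal part_lt)).
by rewrite /= dvdn_part coprime_sym coprime_pi' ?part_gt0 ?part_pnat.
Qed.

Lemma pnat_dvdn_exp m n : 0 < m -> \pi(n).-nat m -> m %| n ^ m.
Proof.
move=> m_gt0 pi_m; apply/dvdn_partP => // q q_m.
have /pnatPpi/(_ q_m) := pi_m; rewrite mem_primes => /and3P[_ _ q_n].
rewrite p_part (@dvdn_trans (q ^ m)) ?dvdn_exp2r //.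
by rewrite dvdn_exp2l // ltnW // ltn_logl.
Qed.

Lemma mul_expn_totient_mod b d k x t :
  coprime b k -> d * x * b ^ (totient k * t) = d * x %[mod d * k].
Proof.
move=> b_k; rewrite -mulnA -!muln_modr; congr (d * _).
by rewrite -modnMmr expnM -modnXm Euler_exp_totient // modnXm exp1n modnMmr muln1.
Qed.

Lemma modn_mul_divn d k y : d %| y -> y = d * (y %/ d %% k) %[mod d * k].
Proof. by move=> d_y; rewrite muln_modr modn_mod [d * (y %/ d)]mulnC divnK. Qed.

Section Residues.
Variables (p : nat) (p_gt0 : 0 < p).

Definition residue (x : nat) : 'I_p := Ordinal (ltn_pmod x p_gt0).

Lemma residue_mod x y : x = y %[mod p] -> residue x = residue y.
Proof. by move=> xy; apply: val_inj. Qed.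

Lemma arith_setE (R : {set 'I_p}) n : arith_set R n <-> residue n \in R.
Proof.
split=> [[r r_R [m ->]] | n_R].
  suff -> : residue (r + p * m) = r by [].
  by apply: val_inj; rewrite /= mulnC addnC modnMDl modn_small.
exists (residue n) => //; exists (n %/ p).
by rewrite /= addnC mulnC -divn_eq.
Qed.

End Residues.

Lemma proper_pair_no_period p (p_gt0 : 0 < p) (R : {set 'I_p}) q :
  proper_pair R -> 0 < q < p ->
  ~ (forall y, (residue p_gt0 (y + q) \in R) = (residue p_gt0 y \in R)).
Proof.
move=> R_proper /andP[q_gt0 q_lt_p] q_period; apply: R_proper.
exists q, [set r : 'I_q | residue p_gt0 r \in R]; split=> // n.
rewrite (arith_setE p_gt0) (arith_setE q_gt0) inE /=.
have periodic y m : (residue p_gt0 (y + q * m) \in R) = (residue p_gt0 y \in R).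
  by elim: m => [|m IH]; rewrite ?muln0 ?addn0 // mulnS addnCA addnC q_period IH.
by rewrite {1}(divn_eq n q) addnC mulnC periodic.
Qed.

Section ZeroCircuits.
Variables (b p : nat) (R : {set 'I_p}).
Hypotheses (b_gt1 : 1 < b) (p_gt0 : 0 < p) (R_proper : proper_pair R).

Local Notation residue := (residue p_gt0).
Local Notation d := p`_(\pi(b)).
Local Notation k := p`_(\pi(b)^').

Lemma accepts_ARp w : accepts (ARp b p_gt0 R) w = (residue (wval w) \in R).
Proof.
suff run_residue s : foldl (@dfa_delta b (ARp b p_gt0 R)) (residue s) w
                     = residue (foldl (fun n (a : 'I_b) => n * b + a) s w).
  have init0 : dfa_init (ARp b p_gt0 R) = residue 0 by apply: val_inj; rewrite /= mod0n.
  by rewrite /accepts /dfa_run init0 run_residue.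
elim: w s => //= a w IH s; rewrite -IH; congr foldl.
by apply: residue_mod; rewrite /= -modnDml modnMml modnDml.
Qed.

Lemma coprime_pi'_part : coprime b k.
Proof. by rewrite coprime_pi' ?part_gt0 ?part_pnat // ltnW. Qed.

Lemma part_dvdn_expn n : d <= n -> d %| b ^ n.
Proof.
move=> d_le_n; rewrite (dvdn_trans (pnat_dvdn_exp (part_gt0 _ _) (part_pnat _ _))) //.
exact: dvdn_exp2l.
Qed.

Lemma part_mul_expn_totient x t : d * x * b ^ (totient k * t) = d * x %[mod p].
Proof. by have := @mul_expn_totient_mod b d k x t coprime_pi'_part; rewrite partnC. Qed.

Definition nerode x y := forall u : seq 'I_b,
  (residue (x * b ^ size u + wval u) \in R) = (residue (y * b ^ size u + wval u) \in R).

Lemma nerode_mod x y : x = y %[mod p] -> nerode x y.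
Proof.
move=> xy u; congr (_ \in R); apply: residue_mod.
by rewrite -modnDml -modnMml xy modnMml modnDml.
Qed.

Lemma nerode_part_shift x1 x2 : nerode (d * x1) (d * x2) ->
  forall y, (residue (y + d * x1) \in R) = (residue (y + d * x2) \in R).
Proof.
move=> x12 y; pose L := totient k * y.+1.
have k_totient_gt0 : 0 < totient k by rewrite totient_gt0 part_gt0.
have y_le_L : y <= L by rewrite /L; nia.
have := x12 (digits b_gt1 L y); rewrite size_digits wval_digits_id //.
have shift x : residue (d * x * b ^ L + y) = residue (y + d * x).
  by apply: residue_mod; rewrite addnC -modnDmr part_mul_expn_totient modnDmr.
by rewrite !shift.
Qed.

Lemma part_shift_contra z1 z2 : z1 < z2 < k ->
  ~ (forall y, (residue (y + d * z1) \in R) = (residue (y + d * z2) \in R)).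
Proof.
case/andP=> z12 z2_lt_k shift.
have d_gt0 : 0 < d := part_gt0 _ _.
have p_eq := partnC (\pi(b)) p_gt0.
apply: (proper_pair_no_period R_proper (q := d * (z2 - z1))); first by apply/andP; split; nia.
(* Shifting by d * (k - z1) turns the offset d * z1 into p = 0 mod p. *)
move=> y; have := shift (y + d * (k - z1)).
have -> : y + d * (k - z1) + d * z1 = y + p by nia.
have -> : y + d * (k - z1) + d * z2 = y + d * (z2 - z1) + p by nia.
have add_p x : residue (x + p) = residue x by apply: residue_mod; rewrite modnDr.
by rewrite !add_p.
Qed.

Lemma nerode_part_inj z1 z2 : z1 < k -> z2 < k -> nerode (d * z1) (d * z2) -> z1 = z2.
Proof.
move=> z1_lt_k z2_lt_k /nerode_part_shift shift.
case: (ltngtP z1 z2) => // [z12 | z21]; exfalso.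
  by apply: (@part_shift_contra z1 z2 _ shift); rewrite z12.
by apply: (@part_shift_contra z2 z1 _ (fun y => esym (shift y))); rewrite z21.
Qed.

Section Minimisation.
Variable M : DFA b.
Hypothesis M_min : is_minimisation (ARp b p_gt0 R) M.

Definition state (x : nat) : M := dfa_run M (digits b_gt1 x x).

Lemma accepts_from_runE w u :
  accepts_from (dfa_run M w) u = (residue (wval w * b ^ size u + wval u) \in R).
Proof. by rewrite accepts_from_run M_min.1 accepts_ARp wval_cat. Qed.

Lemma run_eqE w1 w2 : dfa_run M w1 = dfa_run M w2 <-> nerode (wval w1) (wval w2).
Proof.
split=> [run12 u | nerode12]; first by rewrite -!accepts_from_runE run12.
by apply: (minimisation_accepts_from_inj M_min) => u; rewrite !accepts_from_runE nerode12.
Qed.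

Lemma state_eqE x y : state x = state y <-> nerode x y.
Proof. by rewrite run_eqE !wval_digits_id. Qed.

Lemma run_state w : dfa_run M w = state (wval w).
Proof. by apply/run_eqE; rewrite wval_digits_id. Qed.

Lemma state_surj (q : M) : exists x, q = state x.
Proof. by have [w <-] := minimisation_reachable M_min q; exists (wval w); apply: run_state. Qed.

Lemma state_mod x y : x = y %[mod p] -> state x = state y.
Proof. by move/nerode_mod/state_eqE. Qed.

Lemma iter_zero_state (a : 'I_b) n x : a = 0 :> nat ->
  iter n (fun s => dfa_delta s a) (state x) = state (x * b ^ n).
Proof.
move=> a0; rewrite /state /dfa_run iter_delta -foldl_cat -/(dfa_run M _) run_state.
by rewrite wval_cat wval_nseq0 // addn0 wval_digits_id // size_nseq.
Qed.

Lemma on_zero_circuitE (q : M) :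
  on_zero_circuit q <-> q \in [set state (d * z) | z : 'I_k].
Proof.
have [x ->] := state_surj q; split.
  case=> a [a0 [n [n_gt0 cycle_n]]].
  have := iter_mul_fixed d cycle_n; rewrite iter_zero_state // => fix_x.
  pose y := x * b ^ (n * d).
  have d_y : d %| y by rewrite dvdn_mull // part_dvdn_expn // leq_pmull.
  apply/imsetP; exists (Ordinal (ltn_pmod (y %/ d) (part_gt0 _ _))) => //=.
  rewrite -fix_x; apply: state_mod.
  by have := modn_mul_divn k d_y; rewrite partnC.
case/imsetP=> z _ ->; exists (Ordinal (ltnW b_gt1)); split => //.
exists (totient k); split; first by rewrite totient_gt0 part_gt0.
rewrite iter_zero_state //; apply: state_mod.
by rewrite -[totient k]muln1 part_mul_expn_totient.
Qed.

Lemma card_zero_circuits : #|[set state (d * z) | z : 'I_k]| = k.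
Proof.
rewrite card_imset ?card_ord // => z1 z2 /state_eqE.
by move/nerode_part_inj => /(_ (ltn_ord z1) (ltn_ord z2)) /val_inj.
Qed.

End Minimisation.
End ZeroCircuits.

Theorem proposition23 (b p : nat) (hb : 1 < b) (hp : 0 < p) (R : {set 'I_p}) :
  proper_pair R ->
  forall M : DFA b, is_minimisation (ARp b hp R) M ->
  exists S : {set dfa_state M},
    (forall q, q \in S <-> @on_zero_circuit b M q) /\ #|S| = gdiv_coprime p b.
Proof.
move=> R_proper M M_min.
exists [set state hb M (p`_(\pi(b)) * z) | z : 'I_(p`_(\pi(b)^'))]; split.
  by move=> q; rewrite (on_zero_circuitE hb M_min).
by rewrite (card_zero_circuits hb R_proper M_min) gdiv_coprimeE // ltnW.
Qed.
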